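(* For every $n>0$, there are finite alphabets $\Sigma_I,\Sigma_O$ and a language $L_n\subseteq(\Sigma_I\times\Sigma_O)^\omega$ recognized by a finitary Büchi automaton with costs $\mathcal{A}_n$ with $n+2$ states such that an optimal winning strategy for Player $O$ in $\Gamma_{f_0}(L_n)$ has cost $n$, but an optimal winning strategy for Player $O$ in $\Gamma_{f_1}(L_n)$ has cost $1$.
   Context: A parity automaton with costs is a tuple $\mathcal{A}=(Q,\Sigma,q_I,\delta,\Omega,\mathrm{Cst})$ with a finite set $Q$ of states, a finite alphabet $\Sigma$, an initial state $q_I$, a deterministic complete transition function $\delta\colon Q\times\Sigma\to Q$, a coloring $\Omega\colon Q\to\mathbb{N}$, and a cost function $\mathrm{Cst}$ assigning to every transition $(q,a,\delta(q,a))$ either $\epsilon$ or $\mathtt{i}$ (increment-transition). A finitary Büchi automaton is one in which every transition is an increment-transition and $\Omega(Q)=\{1,2\}$. The run on $a_0a_1\cdots$ is $(q_0,a_0,q_1)(q_1,a_1,q_2)\cdots$ with $q_0=q_I$, $q_{j+1}=\delta(q_j,a_j)$; the cost of a finite run is its number of increment-transitions. For odd $c$, $\mathrm{Ans}(c)=\{c'\in\Omega(Q)\mid c'>c,\ c'\text{ even}\}$. For an infinite run $\rho$ and $n$, $\mathrm{Cor}(\rho,n)=0$ if $\Omega(q_n)$ is even, and otherwise it is the minimal cost of $(q_n,a_n,q_{n+1})\cdots(q_{n'-1},a_{n'-1},q_{n'})$ over $n'>n$ with $\Omega(q_{n'})\in\mathrm{Ans}(\Omega(q_n))$ ($\min\emptyset=\infty$).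 The run is accepting if $\limsup_n\mathrm{Cor}(\rho,n)<\infty$; $L(\mathcal{A})$ is the set of infinite words whose run is accepting. A delay function is a map $f\colon\mathbb{N}\to\mathbb{N}\setminus\{0\}$; for $k\ge0$, $f_k$ denotes the delay function with $f_k(0)=k+1$ and $f_k(i)=1$ for $i>0$. For $L\subseteq(\Sigma_I\times\Sigma_O)^\omega$, the delay game $\Gamma_f(L)$ is played in rounds $i=0,1,2,\ldots$: in round $i$, Player $I$ picks $u_i\in\Sigma_I^{f(i)}$, then Player $O$ picks $v_i\in\Sigma_O$. Player $O$ wins the play if the outcome, i.e., the word over $\Sigma_I\times\Sigma_O$ pairing $u_0u_1u_2\cdots$ and $v_0v_1v_2\cdots$ letterwise, is in $L$. A strategy for Player $O$ is a map $\tau_O\colon\Sigma_I^*\to\Sigma_O$; a play is consistent with $\tau_O$ if $v_i=\tau_O(u_0\cdots u_i)$ for all $i$; $\tau_O$ is winning if every consistent play is won by Player $O$. For a winning strategy $\tau_O$ in $\Gamma_f(L(\mathcal{A}))$, its cost is $\mathrm{Cst}_\mathcal{A}(\tau_O)=\sup_w\limsup_{n\to\infty}\mathrm{Cor}(\rho(w),n)$, where $w$ ranges over outcomes of plays consistent with $\tau_O$ and $\rho(w)$ is the run of $\mathcal{A}$ on $w$; a winning strategy is optimal if its cost is minimal among all winning strategies of Player $O$ in $\Gamma_f(L(\mathcal{A}))$. *)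

From HB Require Import structures.
From mathcomp Require Import all_boot all_order all_algebra.
From mathcomp Require Import all_classical all_reals ereal sequences.
Set Implicit Arguments. Unset Strict Implicit. Unset Printing Implicit Defensive.
Import Order.TTheory GRing.Theory Num.Theory.
Local Open Scope classical_set_scope.
Local Open Scope ring_scope.

(* Parity automaton with costs over alphabet Sigma.
   Cst q a = true  means the transition (q,a,delta q a) is an increment 'i';
   Cst q a = false means it is epsilon. *)
Record pac (Sigma : finType) := Pac {
  state : finType;
  qI : state;
  delta : state -> Sigma -> state;
  Omega : state -> nat;
  Cst : state -> Sigma -> bool }.

Arguments Pac {Sigma}.
Arguments state {Sigma} p.
Arguments qI {Sigma} p.
Arguments delta {Sigma} p _ _.
Arguments Omega {Sigma} p _.
Arguments Cst {Sigma} p _ _.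

Definition finitary_buchi (Sigma : finType) (A : pac Sigma) : Prop :=
  (forall q a, Cst A q a = true) /\ range (Omega A) = [set 1%N; 2%N].

Section Runs.
Context {Sigma : finType} (A : pac Sigma).

Fixpoint runst (w : nat -> Sigma) (j : nat) : state A :=
  match j with
  | 0 => qI A
  | j'.+1 => delta A (runst w j') (w j')
  end.

Definition segcost (w : nat -> Sigma) (n n' : nat) : nat :=
  (\sum_(n <= j < n') (Cst A (runst w j) (w j) : nat))%N.

Definition Ans (c : nat) : set nat :=
  [set c' | range (Omega A) c' /\ (c < c')%N /\ ~~ odd c'].

Context {R : realType}.

(* Cor(rho, n), with min over the empty set = +oo *)
Definition Cor (w : nat -> Sigma) (n : nat) : \bar R :=
  if ~~ odd (Omega A (runst w n)) then 0%E
  else ereal_inf [set ((segcost w n n')%:R)%:E | n' in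
                    [set n' | (n < n')%N /\ Ans (Omega A (runst w n)) (Omega A (runst w n'))]].

Definition accepting (w : nat -> Sigma) : Prop :=
  (limn_esup (Cor w) < +oo)%E.

End Runs.

Definition lang {R : realType} {Sigma : finType} (A : pac Sigma) : set (nat -> Sigma) :=
  [set w | @accepting Sigma A R w].

Definition delay_function (f : nat -> nat) : Prop := forall i, (0 < f i)%N.

Definition fk (k : nat) : nat -> nat := fun i => if i == 0%N then k.+1 else 1%N.

Section Game.
Context {SI SO : finType}.

Definition strategyO := seq SI -> SO.

(* Player I's choices u_0 u_1 ... concatenate to an input word alpha; u_0...u_i
   is the prefix of alpha of length f(0)+...+f(i).  Every alpha arises from a
   unique sequence of choices of Player I, so plays consistent with tau are in
   bijection with input words alpha. *)
Definition prefix_len (f : nat -> nat) (i : nat) : nat := (\sum_(j < i.+1) f j)%N.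

Definition outcome (f : nat -> nat) (tau : strategyO) (alpha : nat -> SI) : nat -> (SI * SO)%type :=
  fun j => (alpha j, tau [seq alpha m | m <- iota 0 (prefix_len f j)]).

Definition winning (f : nat -> nat) (L : set (nat -> (SI * SO)%type)) (tau : strategyO) : Prop :=
  forall alpha, L (outcome f tau alpha).

Context {R : realType}.

Definition strat_cost (A : pac (SI * SO)%type) (f : nat -> nat) (tau : strategyO) : \bar R :=
  ereal_sup [set limn_esup (@Cor _ A R (outcome f tau alpha)) | alpha in [set: nat -> SI]].

Definition optimal_winning (A : pac (SI * SO)%type) (f : nat -> nat) (tau : strategyO) : Prop :=
  winning f (@lang R _ A) tau /\
  forall tau', winning f (@lang R _ A) tau' -> (strat_cost A f tau <= strat_cost A f tau')%E.

End Game.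

(* Player O bets on Player I's next letter.  In state 2, Player O's letter b
   leads to state b; there Player I's letter returns the run to 2 if it equals
   b and sends it to n+1 otherwise, and the states n+1, ..., 3 count down to 2.
   States 0 and 1 have colour 2, all others colour 1, and every transition
   increments, so a request raised in state i >= 2 costs exactly i - 1.  Such
   requests recur in every play, hence every strategy costs between 1 and n.
   Without delay, Player I always contradicts the last bet and forces state
   n+1 infinitely often; with one letter of lookahead, Player O always bets
   right and the run never leaves {0, 1, 2}. *)

From HB Require Import structures.
From mathcomp Require Import all_boot all_order all_algebra.
From mathcomp Require Import all_classical all_reals ereal sequences.
From mathcomp Require Import zify.
Import Order.TTheory GRing.Theory Num.Theory.
Local Open Scope classical_set_scope.
Local Open Scope ring_scope.

Section LimnEsup.
Context {R : realType}.
Local Open Scope ereal_scope.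
Implicit Types (u : (\bar R)^nat) (c : \bar R).

Lemma limn_esupE u : limn_esup u = ereal_inf (range (esups u)).
Proof. by rewrite limn_esup_lim; apply: cvg_lim => //; exact: cvg_esups_inf. Qed.

Lemma limn_esup_le u c : (forall m, u m <= c) -> limn_esup u <= c.
Proof.
move=> le_uc; rewrite limn_esupE (@le_trans _ _ (esups u 0%N)) //.
  by apply: ereal_inf_lbound; exists 0%N.
by apply: ge_ereal_sup => _ [m _ <-].
Qed.

Lemma limn_esup_ge u c :
  (forall N, exists2 m, (N <= m)%N & c <= u m) -> c <= limn_esup u.
Proof.
move=> freq; rewrite limn_esupE; apply: le_ereal_inf_tmp => _ [N _ <-].
have [m le_Nm le_c] := freq N; apply: le_trans le_c _.
by apply: ereal_sup_ubound; exists m.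
Qed.

End LimnEsup.

Section AllIncrement.
Context {Sigma : finType} (A : pac Sigma) {R : realType}.
Hypothesis all_incr : forall q a, Cst A q a.

Lemma segcost_all_incr w m m' : segcost A w m m' = (m' - m)%N.
Proof.
rewrite /segcost (eq_bigr (fun=> 1%N)) => [|j _]; last by rewrite all_incr.
by rewrite sum_nat_const_nat muln1.
Qed.

Lemma Cor_first_answer w m k :
  let c := Omega A (runst A w m) in
  odd c -> (0 < k)%N -> Ans A c (Omega A (runst A w (m + k))) ->
  (forall t, (0 < t < k)%N -> ~ Ans A c (Omega A (runst A w (m + t)))) ->
  Cor A w m = (k%:R)%:E :> \bar R.
Proof.
move=> c odd_c k_gt0 ans_k no_ans; rewrite /Cor -/c odd_c /=.
apply/eqP; rewrite eq_le; apply/andP; split.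
  apply: ereal_inf_lbound; exists (m + k)%N; first by split=> //; lia.
  by rewrite segcost_all_incr addKn.
apply: le_ereal_inf_tmp => _ [m' [lt_mm' ans_m'] <-].
rewrite segcost_all_incr lee_fin ler_nat leqNgt; apply/negP => lt_m'k.
by apply: (no_ans (m' - m)%N); [lia | rewrite subnKC // ltnW].
Qed.

End AllIncrement.

Section StrategyCost.
Context {SI SO : finType} {R : realType} (A : pac (SI * SO)%type) (f : nat -> nat).
Local Open Scope ereal_scope.
Implicit Types (tau : @strategyO SI SO) (c : \bar R).

Lemma strat_cost_le tau c :
  (forall alpha m, Cor A (outcome f tau alpha) m <= c) -> strat_cost A f tau <= c.
Proof. by move=> le_c; apply: ge_ereal_sup => _ [alpha _ <-]; exact: limn_esup_le. Qed.

Lemma strat_cost_ge tau alpha c :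
  (forall N, exists2 m, (N <= m)%N & c <= Cor A (outcome f tau alpha) m) ->
  c <= strat_cost A f tau.
Proof.
move=> freq; apply: (le_trans (limn_esup_ge _ _ freq)).
by apply: ereal_sup_ubound; exists alpha.
Qed.

Lemma winning_of_Cor_le tau (c : R) :
  (forall alpha m, Cor A (outcome f tau alpha) m <= c%:E) ->
  winning f (@lang R _ A) tau.
Proof.
move=> le_c alpha; rewrite /lang /accepting /=.
exact: le_lt_trans (limn_esup_le _ _ (le_c alpha)) (ltry c).
Qed.

Lemma optimal_winning_lower_bound tau c :
  winning f (@lang R _ A) tau -> strat_cost A f tau = c ->
  (forall tau', c <= strat_cost A f tau') -> @optimal_winning _ _ R A f tau.
Proof. by move=> win_tau cost_tau le_c; split=> // tau' _; rewrite cost_tau. Qed.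

End StrategyCost.

Lemma prefix_len_fk k j : prefix_len (fk k) j = (k.+1 + j)%N.
Proof.
elim: j => [|j IH]; first by rewrite /prefix_len big_ord1 addn0.
by rewrite /prefix_len big_ord_recr /= -/(prefix_len _ _) IH addn1 addnS.
Qed.

Definition lookahead : @strategyO bool bool := fun s => last false s.

Lemma lookahead_bets_right alpha m :
  let w := outcome (fk 1) lookahead alpha in (w m.+1).1 = (w m).2.
Proof.
rewrite /= prefix_len_fk /lookahead -[(2 + m)%N]/(m.+1).+1 -(addn1 m.+1).
by rewrite iotaD map_cat last_cat.
Qed.

Fixpoint spoiler_prefix (tau : @strategyO bool bool) (j : nat) : seq bool :=
  if j is j'.+1 then rcons (spoiler_prefix tau j') (~~ tau (spoiler_prefix tau j'))
  else [::].

Definition spoiler (tau : @strategyO bool bool) (j : nat) : bool :=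
  ~~ tau (spoiler_prefix tau j).

Lemma spoiler_prefixE tau j : [seq spoiler tau m | m <- iota 0 j] = spoiler_prefix tau j.
Proof. by elim: j => [//|j IH]; rewrite -addn1 iotaD map_cat IH /= addn1 cats1. Qed.

Lemma spoiler_bets_wrong tau m :
  let w := outcome (fk 0) tau (spoiler tau) in (w m.+1).1 != (w m).2.
Proof. by rewrite /= prefix_len_fk /spoiler spoiler_prefixE /= add0n; case: (tau _). Qed.

Section BettingAutomaton.
Local Open Scope nat_scope.
Variable n : nat.
Hypothesis n_gt0 : 0 < n.

Definition bet_step (i : nat) (ab : bool * bool) : nat :=
  if i < 2 then (if nat_of_bool ab.1 == i then 2 else n.+1)
  else if i == 2 then nat_of_bool ab.2 else i.-1.

Definition bet_aut : pac (bool * bool)%type :=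
  Pac 'I_n.+2 (inord 2) (fun i ab => inord (bet_step i ab))
      (fun i => if i < 2 then 2 else 1) (fun _ _ => true).

Definition state_at (w : nat -> bool * bool) (m : nat) : nat :=
  nat_of_ord (runst bet_aut w m).

Lemma bet_step_lt i ab : i < n.+2 -> bet_step i ab < n.+2.
Proof. by rewrite /bet_step; case: ab => [[] []]; repeat case: ifP; lia. Qed.

Lemma state_at0 w : state_at w 0 = 2.
Proof. by rewrite /state_at /= inordK //; lia. Qed.

Lemma state_atS w m : state_at w m.+1 = bet_step (state_at w m) (w m).
Proof. by rewrite /state_at /= inordK // bet_step_lt. Qed.

Lemma bet_aut_finitary_buchi : finitary_buchi bet_aut.
Proof.
split=> //; apply/seteqP; split=> c /=.
  by case=> i _ <-; case: ifP; [right | left].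
case=> ->; last by exists ord0.
by exists (inord 2) => //=; rewrite inordK //; lia.
Qed.

Lemma state_at_countdown w m t :
  2 <= state_at w m -> t <= (state_at w m).-2 ->
  state_at w (m + t) = state_at w m - t.
Proof.
move=> ge2; elim: t => [|t IH] le_t; first by rewrite addn0 subn0.
rewrite addnS state_atS IH ?(ltnW le_t) // /bet_step.
by do 2 case: ifP; lia.
Qed.

Lemma state_at_countdown_end w m :
  2 <= state_at w m -> state_at w (m + (state_at w m).-1) < 2.
Proof.
move=> ge2; have -> : (state_at w m).-1 = ((state_at w m).-2).+1 by lia.
rewrite addnS state_atS state_at_countdown // /bet_step.
by do 2 case: ifP => ? //; lia.
Qed.

Lemma bet_aut_Ans (q : state bet_aut) : Ans bet_aut 1 (Omega bet_aut q) <-> q < 2.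
Proof.
rewrite /Ans /=; case: ltnP => q2; split=> //.
- by move=> _; split=> //; exists q; rewrite ?q2.
- by case=> _ [].
Qed.

Lemma state_at_ge2_frequently w N : exists2 m, N <= m & 2 <= state_at w m.
Proof.
have [lt2 | ] := ltnP (state_at w N) 2; last by exists N.
by exists N.+1; rewrite // state_atS /bet_step lt2; case: ifP; lia.
Qed.

Lemma state_at_lt2_frequently w N : exists2 m, N < m & state_at w m < 2.
Proof.
have [m le_Nm ge2] := state_at_ge2_frequently w N.+1.
by exists (m + (state_at w m).-1); [lia | exact: state_at_countdown_end].
Qed.

Lemma state_at_lt2_after_bet w m :
  state_at w m.+1 < 2 -> state_at w m = 2 /\ state_at w m.+1 = (w m).2.
Proof.
rewrite state_atS /bet_step.
have [lt2 | ge2] := ltnP (state_at w m) 2; first by case: ifP; lia.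
by case: eqP => [-> | ne2] //; lia.
Qed.

Lemma wrong_bets_reach_top w :
  (forall m, (w m.+1).1 != (w m).2) ->
  forall N, exists2 m, N <= m & state_at w m = n.+1.
Proof.
move=> wrong N; have [[|m] lt_Nm lt2] := state_at_lt2_frequently w N => //.
exists m.+2; first lia.
have [_ bet_m] := state_at_lt2_after_bet w m lt2.
rewrite state_atS /bet_step lt2 bet_m.
by move: (wrong m); case: (w m.+1).1; case: (w m).2.
Qed.

Lemma right_bets_stay_low w :
  (forall m, (w m.+1).1 = (w m).2) -> forall m, state_at w m <= 2.
Proof.
move=> right.
have inv m : state_at w m = 2 \/ state_at w m = (w m).1.
  elim: m => [|m IH]; first by left; exact: state_at0.
  rewrite state_atS /bet_step right; case: IH => ->; first by right.
  by left; case: (w m).1.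
by move=> m; case: (inv m) => ->; [|case: (w m).1].
Qed.

Section Cost.
Context {R : realType}.
Local Open Scope ring_scope.
Local Open Scope ereal_scope.

Lemma Cor_bet_aut w m :
  Cor bet_aut w m =
  ((if state_at w m < 2 then 0 else (state_at w m).-1)%N%:R)%:E :> \bar R.
Proof.
rewrite /state_at; case: ifP => [lt2 | /negbT]; first by rewrite /Cor /= lt2.
rewrite -leqNgt -/(state_at w m) => ge2.
have [odd1 Omega1] : odd (Omega bet_aut (runst bet_aut w m)) /\
  Omega bet_aut (runst bet_aut w m) = 1%N.
  by rewrite /= ltnNge ge2.
apply: Cor_first_answer => //; first by lia.
  by rewrite Omega1 bet_aut_Ans; exact: state_at_countdown_end.
move=> t /andP [t_gt0 lt_t]; rewrite Omega1 bet_aut_Ans -/(state_at w _).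
by rewrite state_at_countdown; lia.
Qed.

Lemma Cor_bet_aut_le w m : Cor bet_aut w m <= (n%:R)%:E :> \bar R.
Proof.
rewrite Cor_bet_aut lee_fin ler_nat /state_at.
by case: ifP; have := ltn_ord (runst bet_aut w m); lia.
Qed.

Implicit Types (f : nat -> nat) (tau : @strategyO bool bool).

Lemma bet_aut_winning f tau : winning f (@lang R _ bet_aut) tau.
Proof. by apply: winning_of_Cor_le => alpha m; exact: Cor_bet_aut_le. Qed.

Lemma bet_aut_strat_cost_le f tau : strat_cost bet_aut f tau <= n%:R%:E :> \bar R.
Proof. by apply: strat_cost_le => alpha m; exact: Cor_bet_aut_le. Qed.

Lemma bet_aut_strat_cost_ge1 f tau : 1 <= strat_cost bet_aut f tau :> \bar R.
Proof.
apply: (strat_cost_ge _ _ _ (fun _ => false)) => N.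
have [m le_Nm ge2] := state_at_ge2_frequently (outcome f tau (fun _ => false)) N.
by exists m; rewrite // Cor_bet_aut ltnNge ge2 lee_fin ler1n -ltnS prednK // ltnW.
Qed.

Lemma delay0_strat_cost_ge tau : n%:R%:E <= strat_cost bet_aut (fk 0) tau :> \bar R.
Proof.
apply: (strat_cost_ge _ _ _ (spoiler tau)) => N.
have [m le_Nm top] := wrong_bets_reach_top _ (spoiler_bets_wrong tau) N.
by exists m; rewrite // Cor_bet_aut top ltnNge ltnS n_gt0.
Qed.

Lemma lookahead_strat_cost_le : strat_cost bet_aut (fk 1) lookahead <= 1 :> \bar R.
Proof.
apply: strat_cost_le => alpha m; rewrite Cor_bet_aut lee_fin lern1.
have := right_bets_stay_low _ (lookahead_bets_right alpha) m.
by case: ifP => // _ le2; rewrite -subn1 leq_subLR.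
Qed.

End Cost.
End BettingAutomaton.

Theorem theorem5 (R : realType) (n : nat) (hn : (0 < n)%N) :
  exists (SI SO : finType) (A : pac (SI * SO)%type),
    finitary_buchi A /\ #|{: state A}| = n.+2 /\
    (exists tau : @strategyO SI SO,
        @optimal_winning SI SO R A (fk 0) tau /\ @strat_cost SI SO R A (fk 0) tau = (n%:R)%:E) /\
    (exists tau : @strategyO SI SO,
        @optimal_winning SI SO R A (fk 1) tau /\ @strat_cost SI SO R A (fk 1) tau = (1%:R)%:E).
Proof.
exists bool, bool, (bet_aut n); split; first exact: bet_aut_finitary_buchi.
split; first by rewrite card_ord.
have cost0 tau : @strat_cost _ _ R (bet_aut n) (fk 0) tau = (n%:R)%:E.
  by apply/eqP; rewrite eq_le (bet_aut_strat_cost_le n hn) (delay0_strat_cost_ge n hn).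
have cost1 : @strat_cost _ _ R (bet_aut n) (fk 1) lookahead = (1%:R)%:E.
  by apply/eqP; rewrite eq_le (lookahead_strat_cost_le n hn) (bet_aut_strat_cost_ge1 n hn).
split.
- exists (fun _ => false); split; last exact: cost0.
  apply: optimal_winning_lower_bound (cost0 _) _; first exact: bet_aut_winning.
  by move=> tau; rewrite cost0.
- exists lookahead; split; last exact: cost1.
  apply: optimal_winning_lower_bound cost1 _; first exact: bet_aut_winning.
  exact: bet_aut_strat_cost_ge1.
Qed.
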